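(* Let $n\ge1$, $P\ge0$, and $\mathbf{h}\in\mathbb{R}^n\setminus\{\mathbf{0}\}$. Let $\mathbf{G}=(1+P\|\mathbf{h}\|^2)\mathbf{I}-P\mathbf{h}\mathbf{h}^T$, $f(\mathbf{a})=\mathbf{a}^T\mathbf{G}\mathbf{a}$, and $\psi=\sqrt{1+P\|\mathbf{h}\|^2}$. Define $$\Phi=\bigcup_{j:\,h_j\ne0}\left\{\frac{c}{|h_j|}\;:\;c-\tfrac12\in\mathbb{Z},\ |c|\le\lceil\psi\rceil+\tfrac12\right\},$$ and list its elements in increasing order as $\xi_1<\xi_2<\dots<\xi_m$. For $x\in\mathbb{R}$ let $\mathbf{a}(x)=\lfloor\mathbf{h}x\rceil$ (componentwise nearest integer). Then $$\min_{\mathbf{a}\in\mathbb{Z}^n\setminus\{\mathbf{0}\}}f(\mathbf{a})=\min\Big(\min_{1\le i\le n}G_{ii},\ \min\big\{f(\mathbf{a}(\tfrac{\xi_i+\xi_{i+1}}{2}))\;:\;1\le i<m,\ \mathbf{a}(\tfrac{\xi_i+\xi_{i+1}}{2})\ne\mathbf{0}\big\}\Big).$$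
   Context: $\|\cdot\|$ is the Euclidean norm, $\lceil\cdot\rceil$ the ceiling function, $\mathbf{I}$ the $n\times n$ identity matrix. The values $G_{ii}=f(\mathbf{u}_i)$ correspond to the standard unit vectors $\mathbf{u}_i$. *)

From HB Require Import structures.
From mathcomp Require Import all_boot all_order all_algebra.
Set Implicit Arguments. Unset Strict Implicit. Unset Printing Implicit Defensive.
Import Order.TTheory GRing.Theory Num.Theory.
Local Open Scope ring_scope.

Section Defs.
Variable R : archiRcfType.
Variable n : nat.

Definition sqnorm (h : 'rV[R]_n) : R := \sum_(i < n) h 0 i ^+ 2.

(* G = (1 + P ||h||^2) I - P h h^T  (h as a row vector, so h h^T = h^T *m h here) *)
Definition Gmat (P : R) (h : 'rV[R]_n) : 'M[R]_n :=
  (1 + P * sqnorm h)%:M - P *: (h^T *m h).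

Definition intvec (a : 'rV[int]_n) : 'rV[R]_n := map_mx (fun z : int => z%:~R) a.

Definition fq (P : R) (h : 'rV[R]_n) (a : 'rV[int]_n) : R :=
  (intvec a *m Gmat P h *m (intvec a)^T) 0 0.

Definition psi (P : R) (h : 'rV[R]_n) : R := Num.sqrt (1 + P * sqnorm h).

Definition inPhi (P : R) (h : 'rV[R]_n) (x : R) : Prop :=
  exists j : 'I_n, h 0 j != 0 /\
    exists c : R, (c - 2^-1) \is a Num.int /\
      `|c| <= (Num.ceil (psi P h))%:~R + 2^-1 /\ x = c / `|h 0 j|.

(* nearest integer: round x = floor (x + 1/2) (halves rounded up) *)
Definition round (x : R) : int := Num.floor (x + 2^-1).

Definition avec (h : 'rV[R]_n) (x : R) : 'rV[int]_n := map_mx round (x *: h).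

Definition cands (P : R) (h : 'rV[R]_n) (xi : seq R) : seq R :=
  [seq Gmat P h i i | i <- enum 'I_n] ++
  [seq fq P h (avec h ((xi`_k + xi`_k.+1) / 2)) |
     k <- iota 0 (size xi).-1 & avec h ((xi`_k + xi`_k.+1) / 2) != 0].

Definition seqmin (s : seq R) : R := foldr Num.min (head 0 s) s.

End Defs.

From HB Require Import structures.
From mathcomp Require Import all_boot all_order all_algebra.
From mathcomp Require Import ring lra zify.
Import Order.TTheory GRing.Theory Num.Theory.
Set Implicit Arguments. Unset Strict Implicit.
Local Open Scope ring_scope.

(* Write q = 1 + P |h|^2, so that f(u) = q |u|^2 - P (u.h)^2.  For every real x,
     q (P |u - x h|^2 + x^2) - P f(u) = (q x - P u.h)^2,
   hence for P > 0 (P = 0 gives G = I) P f(u) is the minimum over x of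
   q (P |u - x h|^2 + x^2), attained at x0 = P u.h / q.  Consequently any integer
   vector that is coordinatewise at least as close to x0 h as a (for instance the
   rounding a(x0)) has f at most f(a).
   Given a <> 0 with a_j <> 0: if a(x0) = 0 then sg(a_j) e_j is such a vector, so
   f(a) >= G_jj.  Otherwise we may assume f(a) < G_jj <= psi^2; then the rounding
   b = a(x0) satisfies |b|^2 <= f(b) <= f(a) < psi^2, so |x0 h_j| <= ceil psi + 1/2
   for all j, which puts x0 between the extreme points of Phi.  Rounding x h_j only
   jumps at x = (r + 1/2) / h_j, and in this range those points belong to Phi, so on
   the gap of Phi containing x0 the midpoint still rounds to a nearest integer
   vector of x0 h, which is therefore a candidate with f at most f(a). *)

Section Vectors.
Variables (R : archiRcfType) (n : nat).
Implicit Types (u v : 'rV[R]_n) (x : R).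

Definition dotv u v : R := \sum_i u 0 i * v 0 i.

Lemma sqnorm_ge0 u : 0 <= sqnorm u.
Proof. by apply: sumr_ge0 => i _; rewrite sqr_ge0. Qed.

Lemma sqr_coord_le_sqnorm u j : u 0 j ^+ 2 <= sqnorm u.
Proof. by rewrite /sqnorm (bigD1 j) //= lerDl sumr_ge0 // => i _; rewrite sqr_ge0. Qed.

Lemma sqnorm_eq0 u : (sqnorm u == 0) = (u == 0).
Proof.
apply/eqP/eqP => [/psumr_eq0P u0 | ->]; last first.
  by rewrite /sqnorm big1 // => i _; rewrite mxE expr0n.
apply/rowP => j; rewrite mxE; apply/eqP; rewrite -sqrf_eq0 u0 // => i _.
exact: sqr_ge0.
Qed.

Lemma sqnorm_sub_scale u v x :
  \sum_i (u 0 i - x * v 0 i) ^+ 2 = sqnorm u - 2 * x * dotv u v + x ^+ 2 * sqnorm v.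
Proof.
rewrite /sqnorm /dotv !mulr_sumr -sumrB -big_split /=.
by apply: eq_bigr => i _; ring.
Qed.

Lemma dotv_sqr_le u v : dotv u v ^+ 2 <= sqnorm u * sqnorm v.
Proof.
have [v0 | v_neq0] := eqVneq v 0.
  by rewrite v0 /dotv big1 ?expr0n ?mulr_ge0 ?sqnorm_ge0 // => i _; rewrite mxE mulr0.
have sv_gt0 : 0 < sqnorm v by rewrite lt_def sqnorm_eq0 v_neq0 sqnorm_ge0.
have : 0 <= \sum_i (u 0 i - dotv u v / sqnorm v * v 0 i) ^+ 2.
  by apply: sumr_ge0 => i _; exact: sqr_ge0.
rewrite sqnorm_sub_scale => /(mulr_ge0 (ltW sv_gt0)).
suff -> : sqnorm v * (sqnorm u - 2 * (dotv u v / sqnorm v) * dotv u v +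
    (dotv u v / sqnorm v) ^+ 2 * sqnorm v) = sqnorm u * sqnorm v - dotv u v ^+ 2.
  by rewrite subr_ge0.
by field; rewrite gt_eqF.
Qed.

End Vectors.

Lemma int_sqr_dist_le (R : realFieldType) (r k : int) (y : R) :
  `|r%:~R - y| <= 2^-1 -> (r%:~R - y) ^+ 2 <= (k%:~R - y) ^+ 2.
Proof.
rewrite ler_norml => /andP[ry1 ry2].
case: (ltgtP k r) => [kr | rk | -> //].
- have : k + 1 <= r by rewrite lezD1.
  rewrite -(ler_int R) intrD => kr'; nra.
- have : r + 1 <= k by rewrite lezD1.
  rewrite -(ler_int R) intrD => rk'; nra.
Qed.

Lemma int_sqr_dist_sg (R : realFieldType) (a : int) (y : R) :
  a != 0 -> `|y| <= 2^-1 -> (Num.sg (a%:~R : R) - y) ^+ 2 <= (a%:~R - y) ^+ 2.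
Proof.
rewrite ler_norml => a_neq0 /andP[y1 y2].
case: (ltgtP a 0) => [a_lt0 | a_gt0 | a0]; last by rewrite a0 eqxx in a_neq0.
- have : a + 1 <= 0 by rewrite lezD1.
  rewrite -(ler_int R) intrD => a_le; rewrite ltr0_sg ?ltr0z //; nra.
- have : 0 + 1 <= a by rewrite lezD1.
  rewrite add0r -(ler_int R) => a_ge; rewrite gtr0_sg ?ltr0z //; nra.
Qed.

Section Rounding.
Variable R : archiRcfType.
Implicit Types (x y : R).

Lemma round_dist y : `|(round y)%:~R - y| <= 2^-1.
Proof.
have /andP[lo hi] := floor_itv (y + 2^-1).
by rewrite intrD -/(round y) in hi; rewrite ler_norml; apply/andP; split; lra.
Qed.

Lemma round_norm_le y (K : int) : `|round y| <= K -> `|y| <= K%:~R + 2^-1.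
Proof.
rewrite ler_norml => /andP[lo hi].
move: lo; rewrite floor_ge_int intrN => lo.
have : Num.floor (y + 2^-1) < K + 1 by rewrite ltzD1.
rewrite floor_lt_int intrD => hi'.
by rewrite ler_norml; apply/andP; split; lra.
Qed.

(* Rounding y c only jumps where y c is a half-integer. *)
Lemma round_midpoint_dist a b x c :
  a <= x <= b -> (forall r : int, a < (r%:~R + 2^-1) / c < b -> False) ->
  `|(round ((a + b) / 2 * c))%:~R - x * c| <= 2^-1.
Proof.
move=> /andP[ax xb] no_break.
have [-> | c_neq0] := eqVneq c 0; first by have := round_dist 0; rewrite !mulr0.
set m := (a + b) / 2; set r := round (m * c).
have /andP[lo hi] := floor_itv (m * c + 2^-1).
rewrite intrD -/r in hi; rewrite -/r in lo.
have between w : m * c <= w < x * c \/ x * c < w <= m * c -> a < w / c < b.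
  case: (ltgtP c 0) => [c_lt0 | c_gt0 | c0]; last by rewrite c0 eqxx in c_neq0.
  - rewrite ltr_ndivlMr // ltr_ndivrMr // /m.
    by case=> /andP[w1 w2]; apply/andP; split; nra.
  - rewrite ltr_pdivlMr // ltr_pdivrMr // /m.
    by case=> /andP[w1 w2]; apply/andP; split; nra.
rewrite ler_norml; apply/andP; split; rewrite leNgt; apply/negP => far.
- by apply: (no_break r); apply: between; left; apply/andP; split; lra.
- apply: (no_break (r - 1)); rewrite intrB; apply: between; right.
  by apply/andP; split; lra.
Qed.

End Rounding.

Section GramForm.
Variables (R : archiRcfType) (n : nat) (P : R) (h : 'rV[R]_n).
Implicit Types (u v : 'rV[R]_n) (a w : 'rV[int]_n) (x : R).

Definition Gform u : R := (1 + P * sqnorm h) * sqnorm u - P * dotv u h ^+ 2.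

Lemma Gmat_formE u : (u *m Gmat P h *m u^T) 0 0 = Gform u.
Proof.
rewrite /Gmat mulmxBr mul_mx_scalar -scalemxAr mulmxBl -!scalemxAl !mxE.
have -> : \sum_j (u *m (h^T *m h)) 0 j * u^T j 0 = dotv u h ^+ 2.
  have -> : \sum_j (u *m (h^T *m h)) 0 j * u^T j 0 = (u *m (h^T *m h) *m u^T) 0 0.
    by rewrite mxE.
  rewrite mulmxA -mulmxA mxE big_ord1 !mxE expr2 /dotv.
  by congr (_ * _); apply: eq_bigr => i _; rewrite !mxE // mulrC.
by congr (_ * _ - _); apply: eq_bigr => i _; rewrite !mxE expr2.
Qed.

Lemma fqE a : fq P h a = Gform (intvec R a).
Proof. exact: Gmat_formE. Qed.

Lemma Gmat_diagE i : Gmat P h i i = 1 + P * sqnorm h - P * h 0 i ^+ 2.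
Proof. by rewrite !mxE eqxx big_ord1 !mxE /=; ring. Qed.

Lemma Gform_delta (c : R) i : Gform (c *: delta_mx 0 i) = c ^+ 2 * Gmat P h i i.
Proof.
set e := c *: delta_mx 0 i.
have eE k : e 0 k = if k == i then c else 0.
  by rewrite !mxE eqxx /=; case: eqP; rewrite ?mulr1 ?mulr0.
rewrite /Gform Gmat_diagE.
have -> : sqnorm e = c ^+ 2.
  rewrite /sqnorm (bigD1 i) //= eE eqxx big1 ?addr0 // => k /negbTE ki.
  by rewrite eE ki expr0n.
have -> : dotv e h = c * h 0 i.
  rewrite /dotv (bigD1 i) //= eE eqxx big1 ?addr0 // => k /negbTE ki.
  by rewrite eE ki mul0r.
ring.
Qed.

Lemma fq_delta i : fq P h (delta_mx 0 i) = Gmat P h i i.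
Proof.
rewrite fqE.
have -> : intvec R (delta_mx 0 i) = 1 *: delta_mx 0 i.
  by apply/rowP => k; rewrite scale1r !mxE; case: (_ && _).
by rewrite Gform_delta expr1n mul1r.
Qed.

Section NonnegativeP.
Hypothesis P_ge0 : 0 <= P.

Lemma Gscale_gt0 : 0 < 1 + P * sqnorm h.
Proof. by rewrite ltr_wpDr // mulr_ge0 ?sqnorm_ge0. Qed.

Lemma sqnorm_le_Gform u : sqnorm u <= Gform u.
Proof.
rewrite /Gform -subr_ge0.
have -> : (1 + P * sqnorm h) * sqnorm u - P * dotv u h ^+ 2 - sqnorm u =
  P * (sqnorm u * sqnorm h - dotv u h ^+ 2) by ring.
by rewrite mulr_ge0 // subr_ge0 dotv_sqr_le.
Qed.

End NonnegativeP.

(* The minimiser in x of the left-hand side of Gform_dist_defect. *)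
Definition Gopt u : R := P * dotv u h / (1 + P * sqnorm h).

Lemma Gform_dist_defect u x :
  (1 + P * sqnorm h) * (P * \sum_i (u 0 i - x * h 0 i) ^+ 2 + x ^+ 2) - P * Gform u =
  ((1 + P * sqnorm h) * x - P * dotv u h) ^+ 2.
Proof. by rewrite sqnorm_sub_scale /Gform; ring. Qed.

Section PositiveP.
Hypothesis P_gt0 : 0 < P.

Lemma Gform_le_of_closer u v :
  \sum_i (v 0 i - Gopt u * h 0 i) ^+ 2 <= \sum_i (u 0 i - Gopt u * h 0 i) ^+ 2 ->
  Gform v <= Gform u.
Proof.
move=> closer; rewrite -(ler_pM2l P_gt0).
have q_gt0 := Gscale_gt0 (ltW P_gt0).
have opt : (1 + P * sqnorm h) * Gopt u - P * dotv u h = 0.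
  by rewrite /Gopt mulrCA divff ?mulr1 ?subrr // gt_eqF.
have du := Gform_dist_defect u (Gopt u); rewrite opt expr0n /= in du.
have dv := Gform_dist_defect v (Gopt u).
have := sqr_ge0 ((1 + P * sqnorm h) * Gopt u - P * dotv v h).
have : (1 + P * sqnorm h) * (P * \sum_i (v 0 i - Gopt u * h 0 i) ^+ 2 + Gopt u ^+ 2)
    <= (1 + P * sqnorm h) * (P * \sum_i (u 0 i - Gopt u * h 0 i) ^+ 2 + Gopt u ^+ 2).
  by rewrite ler_pM2l // lerD2r ler_pM2l.
lra.
Qed.

Lemma fq_le_of_near a w :
  (forall i, `|(w 0 i)%:~R - Gopt (intvec R a) * h 0 i| <= 2^-1) -> fq P h w <= fq P h a.
Proof.
move=> near; rewrite !fqE; apply: Gform_le_of_closer; apply: ler_sum => i _.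
by rewrite !mxE; exact: int_sqr_dist_le.
Qed.

Lemma Gmat_diag_le_fq a j : a 0 j != 0 ->
  (forall i, `|Gopt (intvec R a) * h 0 i| <= 2^-1) -> Gmat P h j j <= fq P h a.
Proof.
move=> aj_neq0 small; set c : R := (a 0 j)%:~R.
have c_neq0 : c != 0 by rewrite intr_eq0.
have sg2 : Num.sg c ^+ 2 = 1 by rewrite sqr_sg c_neq0.
rewrite -[Gmat _ _ _ _]mul1r -sg2 -Gform_delta fqE.
apply: Gform_le_of_closer; apply: ler_sum => i _; rewrite !mxE eqxx /=.
have [-> | _] := eqVneq i j; first by rewrite mulr1; exact: int_sqr_dist_sg.
have := @int_sqr_dist_le R 0 (a 0 i) (Gopt (intvec R a) * h 0 i).
by rewrite mulr0 sub0r normrN; apply.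
Qed.

Lemma norm_Gopt_coord_le a i : fq P h a < 1 + P * sqnorm h ->
  `|Gopt (intvec R a) * h 0 i| <= (Num.ceil (psi P h))%:~R + 2^-1.
Proof.
move=> fq_small; set x := Gopt (intvec R a); set b := avec h x.
have bE k : b 0 k = round (x * h 0 k) by rewrite !mxE.
have b_le_a : fq P h b <= fq P h a.
  by apply: fq_le_of_near => k; rewrite bE; exact: round_dist.
have bi_lt : ((b 0 i)%:~R : R) ^+ 2 < psi P h ^+ 2.
  rewrite sqr_sqrtr ?(ltW (Gscale_gt0 (ltW P_gt0))) //.
  have := sqr_coord_le_sqnorm (intvec R b) i; rewrite mxE => bi_le.
  have := sqnorm_le_Gform (ltW P_gt0) (intvec R b); rewrite -fqE => Gb.
  lra.
apply: round_norm_le; rewrite -bE -(ler_int R) intr_norm.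
apply/ltW/(lt_le_trans _ (ceil_ge _)).
by rewrite -ltr_sqr ?nnegrE ?sqrtr_ge0 // real_normK ?num_real.
Qed.

End PositiveP.
End GramForm.

Section SortedGaps.
Variables (d : Order.disp_t) (T : orderType d) (x0 : T).
Implicit Types (s : seq T) (x y lo hi : T).
Local Open Scope order_scope.

Lemma sorted_gap_notin s k y : sorted <%O s -> (k.+1 < size s)%N ->
  nth x0 s k < y < nth x0 s k.+1 -> y \notin s.
Proof.
move=> ss ks /andP[ky yk]; apply/negP => ys.
have iy : (index y s < size s)%N by rewrite index_mem.
have kl : (k < size s)%N by apply: ltn_trans ks.
have yE : nth x0 s (index y s) = y by rewrite nth_index.
have [yk' | ky'] := leqP (index y s) k.
- have : nth x0 s (index y s) <= nth x0 s k by rewrite (lt_sorted_leq_nth x0 ss).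
  by rewrite yE leNgt ky.
- have : nth x0 s k.+1 <= nth x0 s (index y s) by rewrite (lt_sorted_leq_nth x0 ss).
  by rewrite yE leNgt yk.
Qed.

Lemma sorted_bracket s lo hi x : sorted <%O s -> lo \in s -> hi \in s ->
  lo <= x <= hi -> lo < hi ->
  exists k, [/\ (k.+1 < size s)%N, lo <= nth x0 s k, nth x0 s k <= x,
    x <= nth x0 s k.+1 & nth x0 s k.+1 <= hi].
Proof.
move=> ss los his /andP[lox xhi] lohi.
set iL := index lo s; set iH := index hi s.
have iLs : (iL < size s)%N by rewrite index_mem.
have iHs : (iH < size s)%N by rewrite index_mem.
have loE : nth x0 s iL = lo by rewrite nth_index.
have hiE : nth x0 s iH = hi by rewrite nth_index.
have iLH : (iL < iH)%N by rewrite -(lt_sorted_ltn_nth x0 ss) ?inE // loE hiE.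
have leq_nth i j : (i <= j)%N -> (j < size s)%N -> nth x0 s i <= nth x0 s j.
  by move=> ij js; rewrite (lt_sorted_leq_nth x0 ss) ?inE // (leq_ltn_trans ij).
have iH_pred : iH = iH.-1.+1 by rewrite prednK //; apply: leq_ltn_trans iLH.
have ex : exists j, (iL <= j)%N && (x <= nth x0 s j.+1).
  exists iH.-1; rewrite -iH_pred hiE xhi andbT -ltnS -iH_pred //.
case: (ex_minnP ex) => k /andP[Lk xk] kmin.
have kH : (k.+1 <= iH)%N.
  rewrite iH_pred ltnS; apply: kmin; rewrite -iH_pred hiE xhi andbT -ltnS -iH_pred //.
exists k; split=> //.
- exact: leq_ltn_trans kH iHs.
- by rewrite -loE; apply: leq_nth => //; apply/ltnW/(leq_ltn_trans kH).
- have [kL | Lk'] := leqP k iL.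
    have -> : k = iL by apply/eqP; rewrite eqn_leq kL.
    by rewrite loE.
  have k_gt0 : (0 < k)%N by apply: leq_ltn_trans Lk'.
  have Lk1 : (iL <= k.-1)%N by rewrite -ltnS prednK.
  rewrite leNgt; apply/negP => xk'.
  have := kmin k.-1; rewrite prednK // Lk1 (ltW xk') => /(_ isT).
  by rewrite -ltnS prednK // ltnn.
- by rewrite -hiE; apply: leq_nth.
Qed.

End SortedGaps.

Section SeqMin.
Variable R : archiRcfType.
Implicit Types (s : seq R) (z : R).

Lemma seqminE s : seqmin s = \big[Num.min/head 0 s]_(z <- s) z.
Proof. by rewrite /seqmin foldrE. Qed.

Lemma seqmin_le s z : z \in s -> seqmin s <= z.
Proof. by move=> zs; rewrite seqminE; exact: ge_bigmin_seq. Qed.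

Lemma seqmin_mem s : s != [::] -> seqmin s \in s.
Proof.
case: s => [//|z0 s] _; rewrite seqminE big_seq.
apply: (big_ind (fun z => z \in z0 :: s)) => // [|z z' zs z's]; first exact: mem_head.
by rewrite minEle; case: ifP.
Qed.

End SeqMin.

Section Breakpoints.
Variables (R : archiRcfType) (n : nat) (P : R) (h : 'rV[R]_n).
Let K : int := Num.ceil (psi P h).

Lemma inPhi_half_int j (r : int) : h 0 j != 0 ->
  `|r%:~R + 2^-1 : R| <= K%:~R + 2^-1 -> inPhi P h ((r%:~R + 2^-1) / `|h 0 j|).
Proof.
move=> hj_neq0 rK; exists j; split=> //; exists (r%:~R + 2^-1).
by split; [rewrite addrK intr_int | split].
Qed.

Lemma inPhi_breakpoint j (r : int) : h 0 j != 0 ->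
  `|r%:~R + 2^-1 : R| <= K%:~R + 2^-1 -> inPhi P h ((r%:~R + 2^-1) / h 0 j).
Proof.
move=> hj_neq0 rK; case: (ltgtP (h 0 j) 0) => [hj_lt0 | hj_gt0 | hj0].
- have -> : (r%:~R + 2^-1) / h 0 j = ((- r - 1)%:~R + 2^-1) / `|h 0 j|.
    by rewrite ltr0_norm // intrB intrN; field; rewrite lt_eqF.
  apply: inPhi_half_int => //; rewrite intrB intrN rmorph1.
  by rewrite (_ : - r%:~R - 1 + 2^-1 = - (r%:~R + 2^-1)) ?normrN //; field.
- by rewrite -[h 0 j]gtr0_norm //; exact: inPhi_half_int.
- by rewrite hj0 eqxx in hj_neq0.
Qed.

End Breakpoints.

Section Candidates.
Variables (R : archiRcfType) (n : nat) (P : R) (h : 'rV[R]_n) (xi : seq R).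
Hypotheses (xi_sorted : sorted <%R xi) (xiE : forall x, x \in xi <-> inPhi P h x).
Let cmax : R := (Num.ceil (psi P h))%:~R + 2^-1.

Lemma gap_no_breakpoint k i (r : int) : (k.+1 < size xi)%N -> h 0 i != 0 ->
  `|xi`_k * h 0 i| <= cmax -> `|xi`_k.+1 * h 0 i| <= cmax ->
  xi`_k < (r%:~R + 2^-1) / h 0 i < xi`_k.+1 -> False.
Proof.
move=> ks hi_neq0 lo_le hi_le yk; set y := _ / h 0 i in yk.
have /negP := sorted_gap_notin xi_sorted ks yk; apply; apply/xiE.
apply: inPhi_breakpoint => //; rewrite -/cmax.
have -> : r%:~R + 2^-1 = y * h 0 i by rewrite mulfVK.
clearbody y; case/andP: yk => ky yk.
have [y_ge0 | y_lt0] := lerP 0 y.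
- apply: le_trans hi_le; rewrite !normrM ler_pM2r ?normr_gt0 //.
  by rewrite ger0_norm // (le_trans _ (ler_norm _)) // ltW.
- apply: le_trans lo_le; rewrite !normrM ler_pM2r ?normr_gt0 //.
  by rewrite ltr0_norm // ler_normr lerN2 (ltW ky) orbT.
Qed.

Lemma xi_bracket x : h != 0 -> (forall i, `|x * h 0 i| <= cmax) ->
  exists k, [/\ (k.+1 < size xi)%N, xi`_k <= x, x <= xi`_k.+1
    & forall i, `|xi`_k * h 0 i| <= cmax /\ `|xi`_k.+1 * h 0 i| <= cmax].
Proof.
move=> /rV0Pn[j0 hj0_neq0] x_le.
have [jm _ jm_max] := @arg_maxP _ _ _ j0 xpredT (fun i => `|h 0 i|) erefl.
set hmax := `|h 0 jm| in jm_max.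
have hmax_gt0 : 0 < hmax by apply: lt_le_trans (jm_max j0 erefl); rewrite normr_gt0.
have cmax_gt0 : 0 < cmax.
  rewrite /cmax; have := ceil_ge (psi P h); have := sqrtr_ge0 (1 + P * sqnorm h).
  rewrite /psi; lra.
set Hi := cmax / hmax.
have Hi_gt0 : 0 < Hi by rewrite divr_gt0.
have Hi_in : Hi \in xi.
  apply/xiE; rewrite /Hi /cmax /hmax; apply: inPhi_half_int; first by rewrite -normr_gt0.
  by rewrite ger0_norm //; exact: ltW cmax_gt0.
have mHi_in : - Hi \in xi.
  have E : - ((Num.ceil (psi P h))%:~R + 2^-1) = ((- Num.ceil (psi P h) - 1)%:~R + 2^-1 : R).
    by rewrite intrB intrN rmorph1; field.
  apply/xiE; rewrite /Hi /cmax /hmax -mulNr E.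
  apply: inPhi_half_int; first by rewrite -normr_gt0.
  by rewrite -E normrN ger0_norm //; exact: ltW cmax_gt0.
have x_Hi : - Hi <= x <= Hi by rewrite -ler_norml ler_pdivlMr // -normrM x_le.
have [|k [ks lok kx xk kHi]] := sorted_bracket 0 xi_sorted mHi_in Hi_in x_Hi; first lra.
exists k; split=> // i.
have scaled y : - Hi <= y <= Hi -> `|y * h 0 i| <= cmax.
  rewrite -ler_norml normrM => yHi.
  by rewrite -(divfK (lt0r_neq0 hmax_gt0) cmax) ler_pM //; exact: jm_max.
by split; apply: scaled; apply/andP; split; lra.
Qed.

Lemma avec_mid_near x : h != 0 -> (forall i, `|x * h 0 i| <= cmax) ->
  exists2 k, (k.+1 < size xi)%N &
    forall i, `|(avec h ((xi`_k + xi`_k.+1) / 2) 0 i)%:~R - x * h 0 i| <= 2^-1.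
Proof.
move=> h_neq0 x_le; have [k [ks kx xk bounds]] := xi_bracket h_neq0 x_le.
exists k => // i; rewrite !mxE.
have [-> | hi_neq0] := eqVneq (h 0 i) 0; first by have := round_dist 0; rewrite !mulr0.
have [lo_le hi_le] := bounds i.
apply: round_midpoint_dist => [|r]; first by rewrite kx.
exact: gap_no_breakpoint.
Qed.

Lemma mem_cands_diag j : Gmat P h j j \in cands P h xi.
Proof. by rewrite mem_cat; apply/orP; left; apply: map_f; rewrite mem_enum. Qed.

Lemma mem_cands_mid k : (k.+1 < size xi)%N ->
  let b := avec h ((xi`_k + xi`_k.+1) / 2) in b != 0 -> fq P h b \in cands P h xi.
Proof.
move=> ks b b_neq0; rewrite mem_cat; apply/orP; right; apply: map_f.
by rewrite mem_filter b_neq0 mem_iota /= add0n -ltnS prednK // (leq_ltn_trans _ ks).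
Qed.

Lemma cands_fq z : z \in cands P h xi -> exists2 a : 'rV[int]_n, a != 0 & fq P h a = z.
Proof.
rewrite mem_cat => /orP[/mapP[i _ ->] | /mapP[k]].
- exists (delta_mx 0 i); last exact: fq_delta.
  by apply/rV0Pn; exists i; rewrite mxE !eqxx.
- by rewrite mem_filter => /andP[b_neq0 _] ->; exists (avec h ((xi`_k + xi`_k.+1) / 2)).
Qed.

Lemma cands_le_fq a : 0 <= P -> h != 0 -> a != 0 ->
  exists2 z, z \in cands P h xi & z <= fq P h a.
Proof.
move=> P_ge0 h_neq0 /rV0Pn[j aj_neq0].
have Gjj_in := mem_cands_diag j.
have [P0 | P_neq0] := eqVneq P 0.
  exists (Gmat P h j j) => //; rewrite fqE Gmat_diagE /Gform P0 !mul0r addr0 !subr0 mul1r.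
  have := sqr_coord_le_sqnorm (intvec R a) j; rewrite mxE.
  have := sqr_intr_ge1 (intr_int R (a 0 j)); rewrite intr_eq0 => /(_ aj_neq0).
  exact: le_trans.
have P_gt0 : 0 < P by rewrite lt_def P_neq0.
set x := Gopt P h (intvec R a).
have [Gjj_le | fq_lt] := leP (Gmat P h j j) (fq P h a); first by exists (Gmat P h j j).
have x_le i : `|x * h 0 i| <= cmax.
  apply: norm_Gopt_coord_le => //; apply: lt_le_trans fq_lt _.
  by rewrite Gmat_diagE gerBl mulr_ge0 ?sqr_ge0.
have [k ks near] := avec_mid_near h_neq0 x_le.
set b := avec h _ in near.
have [b0 | b_neq0] := eqVneq b 0.
  have small i : `|x * h 0 i| <= 2^-1 by have := near i; rewrite b0 mxE sub0r normrN.
  by have := Gmat_diag_le_fq P_gt0 aj_neq0 small; rewrite leNgt fq_lt.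
by exists (fq P h b); [exact: mem_cands_mid | exact: fq_le_of_near].
Qed.

End Candidates.

Theorem mainTheorem4 (R : archiRcfType) (n : nat) (P : R) (h : 'rV[R]_n)
    (xi : seq R) :
  (0 < n)%N -> 0 <= P -> h != 0 ->
  sorted <%R xi -> (forall x, x \in xi <-> inPhi P h x) ->
  (exists2 a : 'rV[int]_n, a != 0 & fq P h a = seqmin (cands P h xi)) /\
  (forall a : 'rV[int]_n, a != 0 -> seqmin (cands P h xi) <= fq P h a).
Proof.
move=> n_gt0 P_ge0 h_neq0 xi_sorted xiE.
have cands_neq0 : cands P h xi != [::].
  by apply/eqP => cands0; have := mem_cands_diag P h xi (Ordinal n_gt0); rewrite cands0.
split; first by have [a a_neq0 <-] := cands_fq (seqmin_mem cands_neq0); exists a.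
move=> a /(cands_le_fq xi_sorted xiE P_ge0 h_neq0) [z z_in z_le].
exact: le_trans (seqmin_le z_in) z_le.
Qed.
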